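(* Let $d \ge 2$. For $R \subseteq \{0,1,\dots,d-1\}$ let $\mathrm{err}(R) = \min_{m \in \mathcal{M}_d(R)} \| m - \textsc{max} \|_\infty$, where $\|\cdot\|_\infty$ is the sup norm of a function over the unit cube $[0,1]^d$ and $\textsc{max}(x)=\max_i x_i$. Then $$\mathrm{err}(\{d-1\}) = \frac{1}{2d-1},\qquad \mathrm{err}(\{0, d-1\}) = \frac{1}{2d},\qquad \mathrm{err}(\{0,1,2,\dots,d-1\}) \le \frac{1}{2^d}.$$
   Context: For $x\in\mathbb{R}^d$ and nonempty $A\subseteq\{1,\dots,d\}$, the subpool max is $s(x;A)=\max\{x_j:j\in A\}$. $C(k,r,d)$ denotes the $k$-th $r$-element subset of $\{1,\dots,d\}$ in lexicographic order, $k=1,\dots,\binom{d}{r}$. For $R\subseteq\{0,1,\dots,d-1\}$, $\mathcal{M}_d(R)$ is the set of functions $$x \mapsto \beta_0 + \sum_{r\in R\setminus\{0\}} \sum_{j=1}^{\binom{d}{r}} \beta_r^j\, s(x; C(j,r,d)), \qquad \beta_0,\beta_r^j\in\mathbb{R},$$ where the intercept $\beta_0$ is included if $0\in R$ and omitted (i.e. $\beta_0=0$) if $0\notin R$. *)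

From HB Require Import structures.
From mathcomp Require Import all_boot all_order all_algebra.
From mathcomp Require Import all_classical all_reals.
Set Implicit Arguments. Unset Strict Implicit. Unset Printing Implicit Defensive.
Import Order.TTheory GRing.Theory Num.Theory.
Local Open Scope ring_scope.
Local Open Scope classical_set_scope.

Section Defs.
Variable R : realType.
Variable d : nat.

(* subpool max s(x;A) = max_{j in A} x_j  (0 by convention if A is empty;
   only used for nonempty A) *)
Definition smax (x : 'I_d -> R) (A : {set 'I_d}) : R :=
  if [pick j in A] is Some j then \big[Num.max/x j]_(k in A) x k else 0.

Definition maxf (x : 'I_d -> R) : R := smax x [set: 'I_d].

Definition cube : set ('I_d -> R) := [set x | forall i, 0 <= x i <= 1].

(* M_d(Rs): the intercept is present iff 0 \in Rs; for each r \in Rs, r > 0,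
   one coefficient per r-element subset of {1..d} (the lexicographic labelling
   C(j,r,d) of these subsets is just an indexing of the coefficients). *)
Definition inModel (Rs : pred nat) (f : ('I_d -> R) -> R) : Prop :=
  exists (b0 : R) (beta : {set 'I_d} -> R), forall x : 'I_d -> R,
    f x = (if 0%N \in Rs then b0 else 0)
          + \sum_(A : {set 'I_d} | (#|A| \in Rs) && (0 < #|A|)%N) beta A * smax x A.

Definition supErr (f : ('I_d -> R) -> R) : R :=
  sup [set `|f x - maxf x| | x in cube].

Definition err (Rs : pred nat) : R :=
  inf [set supErr f | f in inModel Rs].

End Defs.

(* The lower bounds come from one linear identity.  If every pool of a model m
   has d - 1 elements, its error e = m - MAX at the vertices 0, 1 = (1,...,1)
   and e_1, ..., e_d of the cube satisfies
     sum_i e(e_i) - (d - 1) e(1) = e(0) - 1,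
   hence 1 <= |e(0)| + (2d - 1) ||e||, where e(0) = 0 without an intercept and
   |e(0)| <= ||e|| with one.  Equal coefficients attain both bounds, because the
   subpool maxima over the pools of size d - 1 add up to (d - 1) MAX plus the
   second largest coordinate.
   For the full model, sum_A (-2)^|A| s(x;A) = 2 sum_k (-1)^k x_(k) for the sorted
   coordinates x_(1) <= ... <= x_(d); up to the sign (-1)^d this alternating sum
   lies in [0, 2] on the cube, which gives the error 2^-d. *)

From HB Require Import structures.
From mathcomp Require Import all_boot all_order all_algebra.
From mathcomp Require Import all_classical all_reals.
From mathcomp Require Import ring lra.
(* Re-imported so that [set0], [setT] and [subsetP] refer to finite sets. *)
From mathcomp Require Import fintype finset.
Set Implicit Arguments.
Unset Strict Implicit.
Unset Printing Implicit Defensive.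
Import Order.TTheory GRing.Theory Num.Theory.
Local Open Scope ring_scope.

Lemma ler_normr_pdiv (R : realFieldType) (a k : R) :
  0 < k -> -1 <= a <= 1 -> `|a / k| <= 1 / k.
Proof.
by move=> k_gt0 a_bd; rewrite normrM normfV (gtr0_norm k_gt0) ler_pM2r ?invr_gt0 // ler_norml.
Qed.

Lemma sum_subsets_setD1 (T : finType) (V : nmodType) (I : {set T}) i (F : {set T} -> V) :
  i \in I ->
  \sum_(A : {set T} | A \subset I) F A = \sum_(B : {set T} | B \subset I :\ i) (F B + F (i |: B)).
Proof.
move=> iI; rewrite big_split (bigID (fun A : {set T} => i \in A)) /= addrC; congr (_ + _).
  by apply: eq_bigl => A; rewrite subsetD1.
rewrite (reindex_onto (fun B => i |: B) (fun A => A :\ i)) /=; last first.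
  by move=> A /andP[_ iA]; rewrite setD1K.
apply: eq_bigl => B; rewrite subsetD1 subUset sub1set iI setU11 andbT /=.
case: (B \subset I) => //=.
by apply/eqP/idP => [<-|iNB]; [rewrite !inE eqxx | rewrite setU1K].
Qed.

Section Subpool.
Context {R : realType} {d : nat}.
Implicit Types (x : 'I_d -> R) (A : {set 'I_d}) (c : R).

Lemma smax_ub x A j : j \in A -> x j <= smax x A.
Proof.
rewrite /smax; case: pickP => [j0 _ jA|/(_ j)/= -> //].
exact: le_bigmax_cond.
Qed.

Lemma smax_le x A c j : j \in A -> (forall k, k \in A -> x k <= c) -> smax x A <= c.
Proof.
rewrite /smax; case: pickP => [j0 j0A _ le_xc|/(_ j)/= -> //].
by apply/bigmax_leP; split; [exact: le_xc|].
Qed.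

Lemma smax_eq x A j : j \in A -> (forall k, k \in A -> x k <= x j) -> smax x A = x j.
Proof.
by move=> jA le_xj; apply/le_anti/andP; split; [exact: smax_le jA le_xj|exact: smax_ub].
Qed.

Lemma smax_set0 x : smax x set0 = 0.
Proof. by rewrite /smax; case: pickP => [j|//]; rewrite inE. Qed.

Lemma smax_cube x A : cube x -> 0 <= smax x A <= 1.
Proof.
move=> cx; have [->|/set0Pn[j jA]] := eqVneq A set0; first by rewrite smax_set0 lexx ler01.
have /andP[x0 _] := cx j.
by rewrite (le_trans x0 (smax_ub x jA)) (smax_le jA) // => k _; case/andP: (cx k).
Qed.

Definition unit_vec (i : 'I_d) : 'I_d -> R := fun j => if j == i then 1 else 0.

Lemma cube_cst c : 0 <= c <= 1 -> cube (cst c : 'I_d -> R).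
Proof. by move=> c01 i. Qed.

Lemma cube0 : cube (cst 0 : 'I_d -> R).
Proof. by apply: cube_cst; rewrite lexx ler01. Qed.

Lemma cube_unit_vec i : cube (unit_vec i).
Proof. by move=> j; rewrite /unit_vec; case: (j == i); rewrite lexx ler01. Qed.

Lemma smax_cst c A : A != set0 -> smax (cst c) A = c.
Proof. by case/set0Pn=> j jA; apply: (smax_eq jA). Qed.

Lemma smax_unit_vec i A : A != set0 -> smax (unit_vec i) A = if i \in A then 1 else 0.
Proof.
case/set0Pn=> j jA; have [iA|iNA] := boolP (i \in A).
  rewrite (smax_eq iA) => [|k _]; rewrite /unit_vec ?eqxx //.
  by case: (k == i); rewrite ?lexx ?ler01.
rewrite (smax_eq jA) => [|k kA]; rewrite /unit_vec.
  by case: eqP => [ji|//]; rewrite -ji jA in iNA.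
case: eqP => [ki|_]; first by rewrite -ki kA in iNA.
by case: (j == i); rewrite ?lexx ?ler01.
Qed.

Lemma smax_setU1 x i B : B != set0 -> (forall j, j \in B -> x i <= x j) ->
  smax x (i |: B) = smax x B.
Proof.
case/set0Pn=> j jB le_xi; apply/le_anti/andP; split.
  apply: (smax_le (setU11 i B)) => k; rewrite in_setU1 => /predU1P[->|kB].
    exact: le_trans (le_xi j jB) (smax_ub x jB).
  exact: smax_ub.
by apply: (smax_le jB) => k kB; apply: smax_ub; rewrite in_setU1 kB orbT.
Qed.

Lemma maxf_ub x i : x i <= maxf x.
Proof. by apply: smax_ub; rewrite inE. Qed.

Lemma maxf_cst c : (0 < d)%N -> maxf (cst c : 'I_d -> R) = c.
Proof. by move=> d_gt0; apply: smax_cst; apply/set0Pn; exists (Ordinal d_gt0). Qed.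

Lemma maxf_unit_vec i : maxf (unit_vec i) = 1.
Proof. by rewrite /maxf smax_unit_vec ?inE //; apply/set0Pn; exists i. Qed.

Lemma sum_smax_cardC1 x : (1 < d)%N -> cube x ->
  exists2 s, 0 <= s <= maxf x &
    \sum_(A : {set 'I_d} | #|A| == d.-1) smax x A = (d.-1)%:R * maxf x + s.
Proof.
move=> d_gt1 cx; have d_gt0 : (0 < d)%N by apply: ltnW.
pose i0 := [arg max_(i > Ordinal d_gt0) x i]%O.
have max_i0 : maxf x = x i0.
  apply: smax_eq; rewrite ?inE // => k _.
  by rewrite /i0; case: (@arg_maxP _ _ _ (Ordinal d_gt0) xpredT x isT) => i _ /(_ k isT).
pose A0 := [set~ i0].
have card_A0 : #|A0| = d.-1 by rewrite cardsC1 card_ord.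
have [j jA0] : exists j, j \in A0.
  by apply/set0Pn; rewrite -card_gt0 card_A0 -ltnS prednK.
exists (smax x A0).
  have /andP[s_ge0 _] := smax_cube A0 cx.
  by rewrite s_ge0 (smax_le jA0) // => k _; apply: maxf_ub.
pose S := [set A : {set 'I_d} | #|A| == d.-1].
have A0S : A0 \in S by rewrite inE card_A0.
have card_S : #|S :\ A0| = d.-1.
  have := cardsD1 A0 S; rewrite A0S add1n /S card_draws card_ord.
  by rewrite -{1}(prednK d_gt0) binSn => -[].
rewrite (eq_bigl (fun A => A \in S)); last by move=> A; rewrite inE.
rewrite (big_setD1 A0 A0S) addrC -card_S mulr_natl -sumr_const; congr (_ + _).
apply: eq_bigr => A; rewrite !inE => /andP[A_neq_A0 /eqP card_A].
have i0A : i0 \in A.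
  apply: contraNT A_neq_A0 => i0NA; rewrite eqEcard card_A card_A0 leqnn andbT.
  by apply/subsetP => k kA; rewrite !inE; apply: contraNneq i0NA => <-.
by rewrite max_i0; apply: (smax_eq i0A) => k _; rewrite -max_i0 maxf_ub.
Qed.

End Subpool.

Section Error.
Variables (R : realType) (d : nat).
Implicit Types (Rs : pred nat) (f : ('I_d -> R) -> R) (x : 'I_d -> R) (c : R).
Local Open Scope classical_set_scope.

Definition pool_model (Rs : pred nat) (b0 : R) (beta : {set 'I_d} -> R) (x : 'I_d -> R) :=
  (if 0%N \in Rs then b0 else 0)
  + \sum_(A : {set 'I_d} | (#|A| \in Rs) && (0 < #|A|)%N) beta A * smax x A.

Lemma pool_model_inModel Rs b0 beta : inModel Rs (pool_model Rs b0 beta).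
Proof. by exists b0, beta. Qed.

Lemma inModel_bounded Rs f : inModel Rs f ->
  has_ubound [set `|f x - maxf x| | x in @cube R d].
Proof.
case=> b0 [beta f_def].
exists (`|if 0%N \in Rs then b0 else 0|
        + \sum_(A : {set 'I_d} | (#|A| \in Rs) && (0 < #|A|)%N) `|beta A| + 1).
move=> _ [x cx <-]; apply: le_trans (ler_normB _ _) _; apply: lerD; last first.
  by case/andP: (smax_cube setT cx) => M0 M1; rewrite ger0_norm.
rewrite f_def; apply: le_trans (ler_normD _ _) _; rewrite lerD2l.
apply: le_trans (ler_norm_sum _ _ _) _; apply: ler_sum => A _.
have /andP[s0 s1] := smax_cube A cx.
by rewrite normrM (ger0_norm s0) ler_piMr.
Qed.

Lemma inModel_cst0 Rs f : inModel Rs f -> 0%N \notin Rs -> f (cst 0) = 0.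
Proof.
case=> b0 [beta ->] Rs0; rewrite (negbTE Rs0) add0r big1 // => A /andP[_ A_gt0].
by rewrite smax_cst ?mulr0 // -card_gt0.
Qed.

Lemma le_supErr Rs f x : inModel Rs f -> cube x -> `|f x - maxf x| <= supErr f.
Proof. by move=> /inModel_bounded f_bd cx; apply: ub_le_sup f_bd _ _; exists x. Qed.

Lemma supErr_le f c : (forall x, cube x -> `|f x - maxf x| <= c) -> supErr f <= c.
Proof.
move=> le_c; apply: ge_sup; last by move=> _ [x cx <-]; apply: le_c.
by exists `|f (cst 0) - maxf (cst 0 : 'I_d -> R)|, (cst 0) => //; apply: cube0.
Qed.

Lemma supErr_ge0 Rs f : inModel Rs f -> 0 <= supErr f.
Proof.
by move=> f_in; apply: le_trans (normr_ge0 _) (le_supErr f_in cube0).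
Qed.

Lemma err_attained Rs c f0 :
  (forall f, inModel Rs f -> c <= supErr f) -> inModel Rs f0 ->
  (forall x, cube x -> `|f0 x - maxf x| <= c) ->
  err R d Rs = c /\ exists f, inModel Rs f /\ supErr f = c.
Proof.
move=> lb f0_in f0_le; have f0_err : supErr f0 = c.
  by apply/le_anti; rewrite supErr_le // lb.
split; last by exists f0.
apply/le_anti/andP; split.
  rewrite -f0_err; apply: ge_inf; last by exists f0.
  by exists c => _ [f f_in <-]; apply: lb.
by apply: lb_le_inf => [|_ [f f_in <-]]; [exists (supErr f0), f0|exact: lb].
Qed.

Lemma err_le_attained Rs c f0 : inModel Rs f0 ->
  (forall x, cube x -> `|f0 x - maxf x| <= c) ->
  err R d Rs <= c /\ exists f, inModel Rs f /\ supErr f <= c.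
Proof.
move=> f0_in f0_le; have f0_err := supErr_le f0_le.
split; last by exists f0.
apply: le_trans f0_err; apply: ge_inf; last by exists f0.
by exists 0 => _ [f f_in <-]; apply: supErr_ge0 f_in.
Qed.

End Error.

Section TopPools.
Variables (R : realType) (d : nat) (Rs : pred nat).
Hypothesis Rs_top : forall n, (n \in Rs) && (0 < n)%N = (n == d.-1).
Implicit Types (f : ('I_d -> R) -> R) (x : 'I_d -> R).

Lemma top_pools_d_gt1 : (1 < d)%N.
Proof. by case: d Rs_top => [|[|n]] // /(_ 0%N); rewrite andbF. Qed.

Lemma natr_dE : d%:R = (d.-1)%:R + 1 :> R.
Proof. by rewrite natr1 prednK // ltnW // top_pools_d_gt1. Qed.

Lemma top_pool_identity f : inModel Rs f ->
  \sum_i (f (unit_vec i) - 1) - (d.-1)%:R * (f (cst 1) - 1) = f (cst 0) - 1.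
Proof.
case=> b0 [beta f_def]; set b := if _ then _ else _ in f_def.
set P := fun A : {set 'I_d} => (#|A| \in Rs) && (0 < #|A|)%N.
have A_neq0 A : P A -> A != set0 by case/andP=> _; rewrite card_gt0.
set S := \sum_(A | P A) beta A.
have f0 : f (cst 0) = b by rewrite f_def big1 ?addr0 // => A /A_neq0/smax_cst->; rewrite mulr0.
have f1 : f (cst 1) = b + S.
  by rewrite f_def; congr (_ + _); apply: eq_bigr => A /A_neq0/smax_cst->; rewrite mulr1.
have sum_fe : \sum_i f (unit_vec i) = b *+ d + (d.-1)%:R * S.
  under eq_bigr do rewrite f_def.
  rewrite big_split sumr_const card_ord exchange_big mulr_sumr /=; congr (_ + _).
  apply: eq_bigr => A PA; rewrite -mulr_sumr.
  under eq_bigr do rewrite smax_unit_vec ?A_neq0 //.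
  rewrite -big_mkcond sumr_const mulrC.
  by move: PA; rewrite /P Rs_top => /eqP->.
rewrite sumrB sum_fe f0 f1 sumr_const card_ord -[b *+ d]mulr_natr.
by rewrite natr_dE; ring.
Qed.

Lemma top_pool_supErr_lb f : inModel Rs f ->
  1 <= `|f (cst 0)| + (2 * d%:R - 1) * supErr f.
Proof.
move=> f_in; have d_gt0 : (0 < d)%N by apply: ltnW top_pools_d_gt1.
set T := \sum_i (f (unit_vec i) - 1) - (d.-1)%:R * (f (cst 1) - 1).
have norm_T : `|f (cst 0) - T| = 1 by rewrite /T top_pool_identity // opprB addrC subrK normr1.
rewrite -[leLHS]norm_T; apply: le_trans (ler_normB _ _) _; rewrite lerD2l.
have -> : 2 * d%:R - 1 = d%:R + (d.-1)%:R :> R by rewrite natr_dE; ring.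
apply: le_trans (ler_normB _ _) _; rewrite mulrDl; apply: lerD.
  have -> : d%:R * supErr f = \sum_(i < d) supErr f by rewrite sumr_const card_ord mulr_natl.
  apply: le_trans (ler_norm_sum _ _ _) _; apply: ler_sum => i _.
  by rewrite -[X in _ - X](maxf_unit_vec i); apply: le_supErr f_in (cube_unit_vec i).
rewrite normrM ger0_norm // ler_wpM2l // -[X in _ - X](maxf_cst 1 d_gt0).
by apply: le_supErr f_in (cube_cst _); rewrite ler01 lexx.
Qed.

Lemma top_pool_model_const b c x : cube x ->
  exists2 s, 0 <= s <= maxf x &
    pool_model Rs b (fun=> c) x = (if 0%N \in Rs then b else 0) + c * ((d.-1)%:R * maxf x + s).
Proof.
move=> cx; have [s s_bd sum_eq] := sum_smax_cardC1 top_pools_d_gt1 cx.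
exists s => //; rewrite /pool_model; under eq_bigl do rewrite Rs_top.
by rewrite -mulr_sumr sum_eq.
Qed.

Lemma err_top_pools : 0%N \notin Rs ->
  err R d Rs = 1 / (2 * d%:R - 1)
  /\ exists f, inModel Rs f /\ supErr f = 1 / (2 * d%:R - 1).
Proof.
move=> Rs0; have k_gt0 : 0 < 2 * d%:R - 1 :> R.
  by rewrite natr_dE; have := ler0n R d.-1; lra.
pose c : R := 2 / (2 * d%:R - 1).
apply: (err_attained (f0 := pool_model Rs 0 (fun=> c))) => [f f_in||x cx].
- have := top_pool_supErr_lb f_in; rewrite (inModel_cst0 f_in Rs0) normr0 add0r.
  by rewrite ler_pdivrMr // mulrC.
- exact: pool_model_inModel.
have [s /andP[s_ge0 s_le] ->] := top_pool_model_const 0 c cx.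
have /andP[M_ge0 M_le1] : 0 <= maxf x <= 1 := smax_cube setT cx.
have -> : (if 0%N \in Rs then 0 else 0) + c * ((d.-1)%:R * maxf x + s) - maxf x
          = (2 * s - maxf x) / (2 * d%:R - 1).
  by rewrite /c if_same natr_dE in k_gt0 *; field; apply: lt0r_neq0.
by apply: ler_normr_pdiv => //; apply/andP; split; lra.
Qed.

Lemma err_top_pools_intercept : 0%N \in Rs ->
  err R d Rs = 1 / (2 * d%:R)
  /\ exists f, inModel Rs f /\ supErr f = 1 / (2 * d%:R).
Proof.
move=> Rs0; have k_gt0 : 0 < 2 * d%:R :> R.
  by rewrite natr_dE; have := ler0n R d.-1; lra.
pose b : R := 1 / (2 * d%:R); pose c : R := 1 / d%:R.
apply: (err_attained (f0 := pool_model Rs b (fun=> c))) => [f f_in||x cx].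
- have f0_le : `|f (cst 0)| <= supErr f.
    by have := le_supErr f_in cube0; rewrite maxf_cst ?subr0 // ltnW // top_pools_d_gt1.
  rewrite ler_pdivrMr //; apply: le_trans (top_pool_supErr_lb f_in) _.
  have -> : supErr f * (2 * d%:R) = supErr f + (2 * d%:R - 1) * supErr f by ring.
  by rewrite lerD2r.
- exact: pool_model_inModel.
have [s /andP[s_ge0 s_le] ->] := top_pool_model_const b c cx.
have /andP[M_ge0 M_le1] : 0 <= maxf x <= 1 := smax_cube setT cx.
have -> : (if 0%N \in Rs then b else 0) + c * ((d.-1)%:R * maxf x + s) - maxf x
          = (1 + 2 * s - 2 * maxf x) / (2 * d%:R).
  by rewrite Rs0 /b /c natr_dE; field; rewrite natr1 pnatr_eq0.
by apply: ler_normr_pdiv => //; apply/andP; split; lra.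
Qed.

End TopPools.
Section AltPools.
Context {R : realType} {d : nat}.
Implicit Types (x : 'I_d -> R) (I : {set 'I_d}).

(* The empty pool may be included: [smax x set0 = 0]. *)
Definition alt_pool_sum I x := \sum_(A : {set 'I_d} | A \subset I) (-2) ^+ #|A| * smax x A.

Lemma alt_pool_sum_Dmin I x i : i \in I -> (forall j, j \in I -> x i <= x j) ->
  alt_pool_sum I x = - alt_pool_sum (I :\ i) x - 2 * x i.
Proof.
move=> iI i_min; rewrite /alt_pool_sum (sum_subsets_setD1 _ iI).
rewrite (bigD1 set0) ?sub0set //= [in RHS](bigD1 set0) ?sub0set //=.
rewrite smax_set0 mulr0 !add0r setU0 cards1 expr1.
rewrite (smax_eq (set11 i)) => [|k]; last by rewrite inE => /eqP->.
rewrite -sumrN addrC mulNr; congr (_ - _).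
apply: eq_bigr => B /andP[sBI B_neq0].
have iNB : i \notin B.
  by apply: contraTN sBI => iB; apply/subsetP => /(_ i iB); rewrite !inE eqxx.
rewrite cardsU1 iNB add1n exprS smax_setU1 //; first by ring.
by move=> j jB; apply: i_min; move/subsetP: sBI => /(_ j jB); rewrite inE => /andP[].
Qed.

Lemma alt_pool_sum_bound n I x lo hi : #|I| = n -> lo <= hi ->
  (forall i, i \in I -> lo <= x i <= hi) ->
  if odd n then 2 * lo <= (-1) ^+ n * alt_pool_sum I x <= 2 * hi
  else 0 <= (-1) ^+ n * alt_pool_sum I x <= 2 * (hi - lo).
Proof.
elim: n I x lo hi => [|n IH] I x lo hi card_I lo_hi x_bd /=.
  rewrite /alt_pool_sum big1 => [|A]; last first.
    by rewrite (cards0_eq card_I) subset0 => /eqP->; rewrite smax_set0 mulr0.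
  by rewrite mulr0 lexx /=; lra.
have [i iI] : exists i, i \in I by apply/set0Pn; rewrite -card_gt0 card_I.
case: (@arg_minP _ _ _ i (fun j => j \in I) x iI) => i1 i1I i1_min.
have card_I1 : #|I :\ i1| = n by move: card_I; rewrite (cardsD1 i1) i1I add1n => -[].
have /andP[lo_i1 i1_hi] := x_bd i1 i1I.
have x_bd1 j : j \in I :\ i1 -> x i1 <= x j <= hi.
  by rewrite inE => /andP[_ jI]; rewrite i1_min //; case/andP: (x_bd j jI).
have := IH (I :\ i1) x (x i1) hi card_I1 i1_hi x_bd1.
rewrite (alt_pool_sum_Dmin i1I i1_min) exprS -signr_odd.
by case: (odd n) => /= /andP[lb ub]; apply/andP; split; rewrite ?expr1 ?expr0 in lb ub *; lra.
Qed.

Lemma alt_pool_sum_cube x : cube x -> 0 <= (-1) ^+ d * alt_pool_sum setT x <= 2.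
Proof.
move=> cx; have := alt_pool_sum_bound (cardsT _) ler01 (fun i _ => cx i).
by rewrite card_ord; case: (odd d) => /andP[lb ub]; apply/andP; split; lra.
Qed.

Definition alt_pool_model : ('I_d -> R) -> R :=
  pool_model [pred r | (r < d)%N] (2 ^- d) (fun A => - (-1) ^+ d * (-2) ^+ #|A| / 2 ^+ d).

Lemma alt_pool_model_err x : (0 < d)%N ->
  alt_pool_model x - maxf x = (1 - (-1) ^+ d * alt_pool_sum setT x) / 2 ^+ d.
Proof.
move=> d_gt0; have setT_neq0 : [set: 'I_d] != set0 by apply/set0Pn; exists (Ordinal d_gt0).
set S := \sum_(A : {set 'I_d} | (#|A| \in [pred r | (r < d)%N]) && (0 < #|A|)%N)
           (-2) ^+ #|A| * smax x A.
have alt_split : alt_pool_sum setT x = (-2) ^+ d * maxf x + S.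
  rewrite /alt_pool_sum (bigD1 setT) ?subsetT //= cardsT card_ord; congr (_ + _).
  rewrite (bigD1 set0) ?sub0set 1?eq_sym //= smax_set0 mulr0 add0r.
  apply: eq_bigl => A; rewrite subsetT inE card_gt0 ltnNge /=; congr (~~ _ && _).
  by rewrite eqEcard subsetT cardsT card_ord.
have sign_sq : (-1) ^+ d * (-2) ^+ d = 2 ^+ d :> R by rewrite -exprMn mulN1r opprK.
rewrite /alt_pool_model /pool_model inE d_gt0 alt_split mulrDr mulrA sign_sq.
have -> : \sum_(A : {set 'I_d} | (#|A| \in [pred r | (r < d)%N]) && (0 < #|A|)%N)
            (- (-1) ^+ d * (-2) ^+ #|A| / 2 ^+ d) * smax x A = - (-1) ^+ d / 2 ^+ d * S.
  by rewrite /S mulr_sumr; apply: eq_bigr => A _; ring.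
by field; rewrite expf_neq0 // pnatr_eq0.
Qed.

Lemma err_all_pools_le : (0 < d)%N ->
  err R d [pred r | (r < d)%N] <= 1 / 2 ^+ d
  /\ exists f : ('I_d -> R) -> R, inModel [pred r | (r < d)%N] f /\ supErr f <= 1 / 2 ^+ d.
Proof.
move=> d_gt0; apply: (err_le_attained (f0 := alt_pool_model)) => [|x cx].
  exact: pool_model_inModel.
rewrite alt_pool_model_err //; apply: ler_normr_pdiv; first exact: exprn_gt0.
by have /andP[lb ub] := alt_pool_sum_cube cx; apply/andP; split; lra.
Qed.

End AltPools.

Theorem theorem2 (R : realType) (d : nat) (hd : (2 <= d)%N) :
  let R1 : pred nat := pred1 d.-1 in
  let R2 : pred nat := [pred r | (r == 0%N) || (r == d.-1)] in
  let R3 : pred nat := [pred r | (r < d)%N] in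
  [/\ err R d R1 = 1 / (2 * d%:R - 1)
    /\ (exists f : ('I_d -> R) -> R, inModel R1 f /\ supErr f = 1 / (2 * d%:R - 1)),
      err R d R2 = 1 / (2 * d%:R)
    /\ (exists f : ('I_d -> R) -> R, inModel R2 f /\ supErr f = 1 / (2 * d%:R))
    & err R d R3 <= 1 / 2 ^+ d
    /\ (exists f : ('I_d -> R) -> R, inModel R3 f /\ supErr f <= 1 / 2 ^+ d)].
Proof.
move=> R1 R2 R3; have d1_neq0 : (0 == d.-1) = false.
  by rewrite eq_sym; apply/negbTE; rewrite -lt0n -ltnS prednK // ltnW.
split.
- by apply: err_top_pools => [[|n]|]; rewrite !inE ?d1_neq0 ?andbT.
- by apply: err_top_pools_intercept => [[|n]|]; rewrite !inE ?d1_neq0 ?andbT.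
- by apply: err_all_pools_le; apply: ltnW.
Qed.
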